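(* Let $k\ge 2$, $n\ge1$ be integers, let $\bar{\mathcal{P}}\in\mathbb{R}^{[k,n]}$ be a columnwise-substochastic tensor, $\mathbf{v}\in\mathbb{R}^n$ a stochastic vector and $\alpha\in[0,1)$. Let $\Delta:=\{\mathbf{y}\in\mathbb{R}^n_+:\mathbf{e}^T\mathbf{y}\le(1-\alpha)^{-\frac{1}{k-1}}\}$ and let $\mathbf{y}_*\in\Delta$. Then $\mathbf{y}_*$ solves the MLPPR system $(\mathbf{e}^T\mathbf{y})^{k-2}\mathbf{y}-\alpha\bar{\mathcal{P}}\mathbf{y}^{k-1}=\mathbf{v}$ if and only if $\mathbf{y}_*$ is a fixed point of the continuous map $$\Phi(\mathbf{y}):=\left(1+\alpha\mathbf{e}^T(\bar{\mathcal{P}}\mathbf{y}^{k-1})\right)^{-\frac{k-2}{k-1}}\left(\mathbf{v}+\alpha\bar{\mathcal{P}}\mathbf{y}^{k-1}\right).$$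
   Context: For $\mathcal{P}\in\mathbb{R}^{[k,n]}$ (real tensors of order $k$, dimension $n$) and $\mathbf{y}\in\mathbb{R}^n$, $(\mathcal{P}\mathbf{y}^{k-1})_i=\sum_{i_2,\dots,i_k}p_{i i_2\dots i_k}y_{i_2}\cdots y_{i_k}$. $\bar{\mathcal{P}}$ is columnwise-substochastic if its entries are nonnegative and $\sum_{i}\bar p_{i i_2\dots i_k}\le1$ for all $i_2,\dots,i_k$. $\mathbf{e}$ is the all-ones vector; a stochastic vector is nonnegative with entries summing to $1$. The MLPPR system $(I\circ\mathbf{e}^{\circ(k-2)}-\alpha\bar{\mathcal{P}})\mathbf{y}^{k-1}=\mathbf{v}$ is exactly $(\mathbf{e}^T\mathbf{y})^{k-2}\mathbf{y}-\alpha\bar{\mathcal{P}}\mathbf{y}^{k-1}=\mathbf{v}$. *)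

From HB Require Import structures.
From mathcomp Require Import all_boot all_order all_algebra.
From mathcomp Require Import reals exp.
Set Implicit Arguments. Unset Strict Implicit. Unset Printing Implicit Defensive.
Import Order.TTheory GRing.Theory Num.Theory.
Local Open Scope ring_scope.

(* A real tensor of order k and dimension n: entry p_{i i_2 ... i_k} is
   P i f where f : 'I_(k.-1) -> 'I_n lists the indices (i_2,...,i_k). *)
Definition tensor (R : realType) (k n : nat) :=
  'I_n -> {ffun 'I_k.-1 -> 'I_n} -> R.

Definition tapply (R : realType) (k n : nat) (P : tensor R k n)
  (y : 'I_n -> R) : 'I_n -> R :=
  fun i => \sum_(f : {ffun 'I_k.-1 -> 'I_n}) P i f * \prod_(j < k.-1) y (f j).

Definition esum (R : realType) (n : nat) (y : 'I_n -> R) : R :=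
  \sum_(i < n) y i.

Definition columnwise_substochastic (R : realType) (k n : nat)
  (P : tensor R k n) : Prop :=
  (forall i f, 0 <= P i f) /\ (forall f, \sum_(i < n) P i f <= 1).

Definition stochastic_vec (R : realType) (n : nat) (v : 'I_n -> R) : Prop :=
  (forall i, 0 <= v i) /\ esum v = 1.

Definition Delta (R : realType) (k n : nat) (alpha : R) (y : 'I_n -> R) : Prop :=
  (forall i, 0 <= y i) /\
  esum y <= powR (1 - alpha) (- ((k.-1)%:R)^-1).

Definition MLPPR (R : realType) (k n : nat) (alpha : R) (P : tensor R k n)
  (v y : 'I_n -> R) : Prop :=
  forall i, esum y ^+ (k - 2) * y i - alpha * tapply P y i = v i.

Definition Phi (R : realType) (k n : nat) (alpha : R) (P : tensor R k n)
  (v y : 'I_n -> R) : 'I_n -> R :=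
  fun i => powR (1 + alpha * esum (tapply P y))
                (- ((k - 2)%:R / (k.-1)%:R)) * (v i + alpha * tapply P y i).

From HB Require Import structures.
From mathcomp Require Import all_boot all_order all_algebra.
From mathcomp Require Import reals exp.
From mathcomp Require Import boolp.
Set Implicit Arguments. Unset Strict Implicit. Unset Printing Implicit Defensive.
Import Order.TTheory GRing.Theory Num.Theory.
Local Open Scope ring_scope.

(* With w := v + alpha P y^(k-1) and m := k - 2, the system reads
   (e^T y)^m y = w.  Summing gives (e^T y)^(m+1) = e^T w, and e^T w =
   1 + alpha e^T (P y^(k-1)) because v is stochastic; so e^T y is the
   (m+1)-th root r of e^T w and y = r^(-m) w, which is exactly Phi(y).
   Conversely, if y = r^(-m) w then e^T y = r^(-m) r^(m+1) = r. *)

Section RealPowers.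
Variable R : realType.

Lemma powR_invn_expn (u : R) (m : nat) : 0 <= u ->
  (u `^ m.+1%:R^-1) ^+ m.+1 = u.
Proof.
move=> u_ge0; rewrite -powR_mulrn ?powR_ge0 // -powRrM mulVf ?powRr1 //.
by rewrite pnatr_eq0.
Qed.

Lemma powR_neg_frac (u : R) (m : nat) : 0 <= u ->
  u `^ (- (m%:R / m.+1%:R)) = ((u `^ m.+1%:R^-1) ^+ m)^-1.
Proof.
by move=> u_ge0; rewrite powRN mulrC powRrM powR_mulrn ?powR_ge0.
Qed.

End RealPowers.

Section Esum.
Variables (R : realType) (n : nat).

Lemma esumD (y z : 'I_n -> R) : esum (fun i => y i + z i) = esum y + esum z.
Proof. exact: big_split. Qed.

Lemma esumZ (c : R) (y : 'I_n -> R) : esum (fun i => c * y i) = c * esum y.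
Proof. by rewrite /esum mulr_sumr. Qed.

Lemma esum_ge0 (y : 'I_n -> R) : (forall i, 0 <= y i) -> 0 <= esum y.
Proof. by move=> y_ge0; apply: sumr_ge0 => i _. Qed.

Lemma homogeneous_eq_iff_scaled (m : nat) (y w : 'I_n -> R) :
  (forall i, 0 <= y i) -> 0 < esum w ->
  (forall i, esum y ^+ m * y i = w i) <->
  y = (fun i => ((esum w `^ m.+1%:R^-1) ^+ m)^-1 * w i).
Proof.
move=> y_ge0 w_gt0; set r := esum w `^ m.+1%:R^-1.
have r_gt0 : 0 < r by rewrite powR_gt0.
have r_root : r ^+ m.+1 = esum w by rewrite powR_invn_expn ?ltW.
have rm_neq0 : r ^+ m != 0 by rewrite expf_neq0 ?gt_eqF.
split=> [hom | ->].
- have sum_root : esum y ^+ m.+1 = r ^+ m.+1.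
    by rewrite r_root exprSr -esumZ; congr esum; apply: funext.
  have sum_eq_r : esum y = r.
    by apply: (pexpIrn (ltn0Sn m)) sum_root; rewrite ?nnegrE ?esum_ge0 ?ltW.
  apply: funext => i.
  by rewrite -hom sum_eq_r mulrA mulVf ?mul1r.
- have sum_eq_r : esum (fun i => (r ^+ m)^-1 * w i) = r.
    by rewrite esumZ -r_root exprSr mulrA mulVf ?mul1r.
  by move=> i; rewrite sum_eq_r mulrA mulfV ?mul1r.
Qed.

End Esum.

Lemma tapply_ge0 (R : realType) (k n : nat) (P : tensor R k n) (y : 'I_n -> R) :
  (forall i f, 0 <= P i f) -> (forall i, 0 <= y i) ->
  forall i, 0 <= tapply P y i.
Proof.
move=> P_ge0 y_ge0 i; apply: sumr_ge0 => f _.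
by rewrite mulr_ge0 ?prodr_ge0.
Qed.

Theorem lemma3p5 (R : realType) (k n : nat) (hk : (2 <= k)%N) (hn : (1 <= n)%N)
  (P : tensor R k n) (v : 'I_n -> R) (alpha : R)
  (hP : columnwise_substochastic P) (hv : stochastic_vec v)
  (ha0 : 0 <= alpha) (ha1 : alpha < 1)
  (ystar : 'I_n -> R) (hy : Delta k alpha ystar) :
  MLPPR alpha P v ystar <-> Phi alpha P v ystar = ystar.
Proof.
case: k hk P hP hy => [|[|m]] // _ P [P_ge0 _] [y_ge0 _].
set w := fun i => v i + alpha * tapply P ystar i.
have T_ge0 := tapply_ge0 P_ge0 y_ge0.
have esum_w : esum w = 1 + alpha * esum (tapply P ystar).
  by rewrite esumD esumZ hv.2.
have w_gt0 : 0 < esum w.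
  by rewrite esum_w ltr_wpDr ?mulr_ge0 ?esum_ge0.
have MLPPR_hom : MLPPR alpha P v ystar <-> forall i, esum ystar ^+ m * ystar i = w i.
  by rewrite /MLPPR subn2; split=> H i; [rewrite /w -H subrK | rewrite H addrK].
rewrite MLPPR_hom homogeneous_eq_iff_scaled // /Phi subn2 /= -esum_w powR_neg_frac ?ltW //.
by split=> /esym.
Qed.
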